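(* Let $X,Y$ be infinite dimensional Banach lattices which are relatively $s$-decomposable for some $1\le s\le\infty$, and suppose $\ell_q$ is finitely lattice representable in $X_L$, where $1/q+1/s\le1$. Then for every $p\ge1$ with $1/p\ge1/q+1/s$, $Y$ satisfies an upper $p$-estimate and $M^{[p]}(Y)\le D_s(X,Y)$.
   Context: Banach lattices are real; disjoint means $|x|\wedge|y|=0$. $X,Y$ are relatively $s$-decomposable if there is $D$ with $\|\sum_{i=1}^n y_i\|_Y\le D(\sum_i(\|y_i\|_Y/\|x_i\|_X)^s)^{1/s}\|\sum_{i=1}^n x_i\|_X$ for all $n$ and all pairwise disjoint nonzero $x_i\in X$, pairwise disjoint nonzero $y_i\in Y$; $D_s(X,Y)$ is the infimum of such $D$. Upper $p$-estimate: $\|\sum y_i\|\le M(\sum\|y_i\|^p)^{1/p}$ for all finite families of pairwise disjoint elements; $M^{[p]}(Y)$ is the infimum of such $M$. $\ell_q$ is finitely lattice representable in a Banach lattice $Z$ if for every $n$ and $\varepsilon>0$ there are pairwise disjoint $z_1,\dots,z_n\in Z$ with $\|a\|_{\ell_q^n}\le\|\sum a_iz_i\|_Z\le(1+\varepsilon)\|a\|_{\ell_q^n}$ for all $a\in\mathbb R^n$. $\mathfrak B_n(X)$ is the set of $n$-tuples of pairwise disjoint norm-one elements of $X$; $\Phi_n(a):=\inf\{\|\sum_{i=1}^n a_ix_i\|_X:(x_i)\in\mathfrak B_n(X)\}$, $\|a\|_{X_L(n)}:=\inf\{\sum_{k\in F}\Phi_n(a^k): F\text{ finite}, a=\sum_{k\in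 F}a^k, a^k\in\mathbb R^n\}$, and $X_L$ is the Banach lattice (coordinate-wise order) of real sequences with $\|a\|_{X_L}:=\sup_n\|(a_i)_{i=1}^n\|_{X_L(n)}<\infty$. *)

From HB Require Import structures.
From mathcomp Require Import all_boot all_order all_algebra.
From mathcomp Require Import all_classical all_reals all_analysis.
Set Implicit Arguments. Unset Strict Implicit. Unset Printing Implicit Defensive.
Import Order.TTheory GRing.Theory Num.Theory numFieldNormedType.Exports.
Local Open Scope classical_set_scope.
Local Open Scope ring_scope.

Definition labs (R : realType) (V : completeNormedModType R)
  (join : V -> V -> V) (x : V) : V := join x (- x).

Definition lmeet (R : realType) (V : completeNormedModType R)
  (join : V -> V -> V) (x y : V) : V := - join (- x) (- y).

Definition is_banach_lattice (R : realType) (V : completeNormedModType R)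
  (le : V -> V -> Prop) (join : V -> V -> V) : Prop :=
  (forall x, le x x) /\
  (forall x y, le x y -> le y x -> x = y) /\
  (forall x y z, le x y -> le y z -> le x z) /\
  (forall x y z, le x y -> le (x + z) (y + z)) /\
  (forall x y (a : R), le x y -> 0 <= a -> le (a *: x) (a *: y)) /\
  (forall x y, le x (join x y) /\ le y (join x y)) /\
  (forall x y z, le x z -> le y z -> le (join x y) z) /\
  (forall x y, le (labs join x) (labs join y) -> `|x| <= `|y|).

Record banachLattice (R : realType) := BanachLattice {
  bl_car :> completeNormedModType R;
  bl_le : bl_car -> bl_car -> Prop;
  bl_join : bl_car -> bl_car -> bl_car;
  bl_ax : is_banach_lattice bl_le bl_join }.

Definition ldisjoint (R : realType) (X : banachLattice R) (x y : X) : Prop :=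
  lmeet (@bl_join R X) (labs (@bl_join R X) x) (labs (@bl_join R X) y) = 0.

Definition pairwise_disjoint (R : realType) (X : banachLattice R) (n : nat)
  (x : 'I_n -> X) : Prop :=
  forall i j : 'I_n, i != j -> ldisjoint (x i) (x j).

Definition infinite_dim (R : realType) (X : banachLattice R) : Prop :=
  forall n : nat, exists v : 'I_n -> X,
    forall a : 'I_n -> R, \sum_(i < n) a i *: v i = 0 -> forall i, a i = 0.

Definition lnorm (R : realType) (q : \bar R) (n : nat) (a : 'I_n -> R) : R :=
  match q with
  | r%:E => (\sum_(i < n) `|a i| `^ r) `^ r^-1
  | _ => \big[Num.max/0]_(i < n) `|a i|
  end.

Definition recip (R : realType) (q : \bar R) : R :=
  match q with
  | r%:E => r^-1
  | _ => 0
  end.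

Definition rel_decomp_const (R : realType) (X Y : banachLattice R)
  (s : \bar R) (D : R) : Prop :=
  forall (n : nat) (x : 'I_n -> X) (y : 'I_n -> Y),
    (forall i, x i != 0) -> (forall i, y i != 0) ->
    pairwise_disjoint x -> pairwise_disjoint y ->
    `|\sum_(i < n) y i| <= D * lnorm s (fun i => `|y i| / `|x i|) * `|\sum_(i < n) x i|.

Definition rel_decomposable (R : realType) (X Y : banachLattice R)
  (s : \bar R) : Prop := exists D : R, rel_decomp_const X Y s D.

Definition Ds (R : realType) (X Y : banachLattice R) (s : \bar R) : R :=
  inf [set D : R | rel_decomp_const X Y s D].

Definition upper_est_const (R : realType) (Y : banachLattice R)
  (p : \bar R) (M : R) : Prop :=
  forall (n : nat) (y : 'I_n -> Y), pairwise_disjoint y ->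
    `|\sum_(i < n) y i| <= M * lnorm p (fun i => `|y i|).

Definition upper_estimate (R : realType) (Y : banachLattice R) (p : \bar R) : Prop :=
  exists M : R, upper_est_const Y p M.

Definition Mp (R : realType) (Y : banachLattice R) (p : \bar R) : R :=
  inf [set M : R | upper_est_const Y p M].

Definition Bn (R : realType) (X : banachLattice R) (n : nat) : set ('I_n -> X) :=
  [set x | (forall i, `|x i| = 1) /\ pairwise_disjoint x].

Definition Phi (R : realType) (X : banachLattice R) (n : nat) (a : 'I_n -> R) : R :=
  inf [set `|\sum_(i < n) a i *: x i| | x in @Bn R X n].

Definition XLn (R : realType) (X : banachLattice R) (n : nat) (a : 'I_n -> R) : R :=
  inf [set \sum_(b <- F) Phi X b |
        F in [set F : seq ('I_n -> R) | forall i, \sum_(b <- F) b i = a i]].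

Definition XLnorm (R : realType) (X : banachLattice R) (a : nat -> R) : \bar R :=
  ereal_sup [set (XLn X (fun i : 'I_n => a (nat_of_ord i)))%:E | n in [set: nat]].

Definition inXL (R : realType) (X : banachLattice R) (a : nat -> R) : Prop :=
  (XLnorm X a < +oo)%E.

(* l_q finitely lattice representable in X_L (coordinatewise order, so
   |z|/\|w| = 0 means min(|z k|,|w k|) = 0 for every k) *)
Definition flr_in_XL (R : realType) (X : banachLattice R) (q : \bar R) : Prop :=
  forall (n : nat) (eps : R), 0 < eps ->
    exists z : 'I_n -> (nat -> R),
      [/\ (forall i, inXL X (z i)),
          (forall i j, i != j -> forall k, Num.min `|z i k| `|z j k| = 0) &
          (forall a : 'I_n -> R,
             let za := (fun k => \sum_(i < n) a i * z i k) in
             ((lnorm q a)%:E <= XLnorm X za)%E /\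
             (XLnorm X za <= ((1 + eps) * lnorm q a)%:E)%E)].

(* Fix disjoint y_1, ..., y_n in Y and weights c_i > 0.  Finite lattice representability gives
   disjoint blocks z_i in X_L spanning an almost isometric copy of l_q^n; cutting them off at a
   common length and approximating the infima defining the X_L-norm turns them into finitely
   many disjoint families x^b in X with sum_b |x^b_i| >= (1 - e) c_i for each i and
   sum_b |sum_i x^b_i| <= (1 + e) |c|_q + e.  Splitting each y_i into the convex combination of
   pieces proportional to |x^b_i| and applying relative decomposability to each family gives
   |sum_i y_i| <= D |(|y_i| / c_i)_i|_s |c|_q.  With 1/rho = 1/q + 1/s, the choice
   c_i = |y_i|^(rho/q) turns the right-hand side into D |(|y_i|)_i|_rho <= D |(|y_i|)_i|_p.
   Hence every relative decomposition constant D is an upper p-estimate constant. *)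

From mathcomp Require Import all_boot all_order all_algebra.
From mathcomp Require Import all_classical all_reals all_analysis.
From mathcomp Require Import ring lra.
Import Order.TTheory GRing.Theory Num.Theory.
Set Implicit Arguments. Unset Strict Implicit. Unset Printing Implicit Defensive.
Local Open Scope classical_set_scope.
Local Open Scope ring_scope.

Section BanachLatticeTheory.
Variables (R : realType) (X : banachLattice R).
Local Notation le := (@bl_le R X).
Local Notation join := (@bl_join R X).
Local Notation lab := (labs join).
Local Notation meet := (lmeet join).
Implicit Types x y z w : X.

Let ax := @bl_ax R X.

Lemma bl_lexx x : le x x. Proof. by case: ax => h _; apply: h. Qed.
Lemma bl_le_anti x y : le x y -> le y x -> x = y.
Proof. by case: ax => _ [h _]; apply: h. Qed.
Lemma bl_le_trans x y z : le x y -> le y z -> le x z.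
Proof. by case: ax => _ [] _ [h _]; apply: h. Qed.
Lemma bl_leDr x y z : le x y -> le (x + z) (y + z).
Proof. by case: ax => _ [] _ [] _ [h _]; apply: h. Qed.
Lemma bl_leZ x y (a : R) : le x y -> 0 <= a -> le (a *: x) (a *: y).
Proof. by case: ax => _ [] _ [] _ [] _ [h _]; apply: h. Qed.
Lemma bl_join_ubl x y : le x (join x y).
Proof. by case: ax => _ [] _ [] _ [] _ [] _ [h _]; case: (h x y). Qed.
Lemma bl_join_ubr x y : le y (join x y).
Proof. by case: ax => _ [] _ [] _ [] _ [] _ [h _]; case: (h x y). Qed.
Lemma bl_join_lub x y z : le x z -> le y z -> le (join x y) z.
Proof. by case: ax => _ [] _ [] _ [] _ [] _ [] _ [h _]; apply: h. Qed.
Lemma bl_norm_le x y : le (lab x) (lab y) -> `|x| <= `|y|.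
Proof. by case: ax => _ [] _ [] _ [] _ [] _ [] _ [] _ h; apply: h. Qed.

Lemma bl_leDl x y z : le x y -> le (z + x) (z + y).
Proof. by rewrite ![z + _]addrC; apply: bl_leDr. Qed.

Lemma bl_leD x y z w : le x y -> le z w -> le (x + z) (y + w).
Proof. by move=> h1 h2; apply: bl_le_trans (bl_leDr _ h1) (bl_leDl _ h2). Qed.

Lemma bl_leN x y : le x y -> le (- y) (- x).
Proof. by move=> /(bl_leDr (- x - y)); rewrite addrA subrr add0r addrCA subrr addr0. Qed.

Lemma bl_leNN x y : le (- y) (- x) -> le x y.
Proof. by move/bl_leN; rewrite !opprK. Qed.

Lemma bl_le_subr x y : le 0 y -> le (x - y) x.
Proof. by move/bl_leN/(bl_leDl x); rewrite oppr0 addr0. Qed.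

Lemma bl_joinC x y : join x y = join y x.
Proof.
by apply: bl_le_anti; apply: bl_join_lub; first [exact: bl_join_ubr | exact: bl_join_ubl].
Qed.

Lemma bl_joinDl x y z : join (z + x) (z + y) = z + join x y.
Proof.
apply: bl_le_anti.
  by apply: bl_join_lub; apply: bl_leDl; [apply: bl_join_ubl | apply: bl_join_ubr].
have h : le (join x y) (- z + join (z + x) (z + y)).
  apply: bl_join_lub.
  - by have := bl_leDl (- z) (bl_join_ubl (z + x) (z + y)); rewrite addKr.
  - by have := bl_leDl (- z) (bl_join_ubr (z + x) (z + y)); rewrite addKr.
by have := bl_leDl z h; rewrite addNKr.
Qed.

Lemma bl_joinZ (t : R) x y : 0 <= t -> join (t *: x) (t *: y) = t *: join x y.
Proof.
rewrite le_eqVlt => /predU1P[<-|t0].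
  rewrite !scale0r; apply: bl_le_anti; last exact: bl_join_ubl.
  by apply: bl_join_lub; apply: bl_lexx.
apply: bl_le_anti.
  by apply: bl_join_lub; apply: bl_leZ (ltW t0); [apply: bl_join_ubl | apply: bl_join_ubr].
have ti0 : 0 <= t^-1 by rewrite invr_ge0 ltW.
have h : le (join x y) (t^-1 *: join (t *: x) (t *: y)).
  apply: bl_join_lub.
  - by rewrite -{1}[x](scalerK (lt0r_neq0 t0)); apply: bl_leZ ti0; apply: bl_join_ubl.
  - by rewrite -{1}[y](scalerK (lt0r_neq0 t0)); apply: bl_leZ ti0; apply: bl_join_ubr.
by have := bl_leZ h (ltW t0); rewrite scalerKV ?lt0r_neq0.
Qed.

Lemma bl_meet_lbl x y : le (meet x y) x.
Proof. by apply: bl_leNN; rewrite /lmeet opprK; apply: bl_join_ubl. Qed.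
Lemma bl_meet_lbr x y : le (meet x y) y.
Proof. by apply: bl_leNN; rewrite /lmeet opprK; apply: bl_join_ubr. Qed.
Lemma bl_meet_glb x y z : le z x -> le z y -> le z (meet x y).
Proof.
by move=> h1 h2; apply: bl_leNN; rewrite /lmeet opprK; apply: bl_join_lub; apply: bl_leN.
Qed.

Lemma bl_meetC x y : meet x y = meet y x. Proof. by rewrite /lmeet bl_joinC. Qed.

Lemma bl_meet_idl x y : le x y -> meet x y = x.
Proof.
by move=> h; apply: bl_le_anti; [apply: bl_meet_lbl | apply: bl_meet_glb => //; apply: bl_lexx].
Qed.

Lemma bl_meet_lel x y z : le y z -> le (meet y x) (meet z x).
Proof.
by move=> h; apply: bl_meet_glb; [apply: bl_le_trans h; apply: bl_meet_lbl | apply: bl_meet_lbr].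
Qed.
Lemma bl_meet_ler x y z : le y z -> le (meet x y) (meet x z).
Proof. by move=> h; rewrite ![meet x _]bl_meetC; apply: bl_meet_lel. Qed.

Lemma bl_meetZ (t : R) x y : 0 <= t -> meet (t *: x) (t *: y) = t *: meet x y.
Proof. by move=> t0; rewrite /lmeet -!scalerN bl_joinZ // scalerN. Qed.

Lemma bl_meet_subadd x y z : le 0 x -> le 0 y -> le 0 z ->
  le (meet x (y + z)) (meet x y + meet x z).
Proof.
move=> x0 y0 z0; set w := meet x (y + z).
suff h : le (w - meet x y) (meet x z) by have := bl_leDl (meet x y) h; rewrite addrCA subrr addr0.
apply: bl_meet_glb.
- by apply: bl_le_trans (bl_meet_lbl x (y + z)); apply: bl_le_subr; apply: bl_meet_glb.
- rewrite /lmeet opprK -bl_joinDl; apply: bl_join_lub.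
  + by have := bl_leDr (- x) (bl_meet_lbl x (y + z)); rewrite subrr => /bl_le_trans; apply.
  + by have := bl_leDr (- y) (bl_meet_lbr x (y + z)); rewrite addrAC subrr add0r.
Qed.

Lemma labs_ge0 x : le 0 (lab x).
Proof.
have h : le (x - x) (lab x + lab x) by apply: bl_leD; [apply: bl_join_ubl | apply: bl_join_ubr].
have half0 : 0 <= 2^-1 :> R by rewrite invr_ge0.
have half : (2^-1 + 2^-1 : R) = 1 by lra.
by have := bl_leZ h half0; rewrite subrr scaler0 scalerDr -scalerDl half scale1r.
Qed.

Lemma bl_le_labs x : le x (lab x). Proof. exact: bl_join_ubl. Qed.
Lemma bl_leN_labs x : le (- x) (lab x). Proof. exact: bl_join_ubr. Qed.

Lemma labsN x : lab (- x) = lab x. Proof. by rewrite /labs opprK bl_joinC. Qed.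

Lemma labs_triangle x y : le (lab (x + y)) (lab x + lab y).
Proof.
apply: bl_join_lub; first by apply: bl_leD; apply: bl_join_ubl.
by rewrite opprD; apply: bl_leD; apply: bl_join_ubr.
Qed.

Lemma labsZ (t : R) x : lab (t *: x) = `|t| *: lab x.
Proof.
have [t0|t0] := leP 0 t; first by rewrite ger0_norm // /labs -scalerN bl_joinZ.
rewrite ltr0_norm // -labsN -scaleNr /labs -scalerN bl_joinZ //.
by rewrite oppr_ge0 ltW.
Qed.

Lemma labs0 : lab 0 = 0.
Proof. by have := labsZ 0 0; rewrite scale0r normr0 scale0r. Qed.

Lemma ldisjoint_sym x y : ldisjoint x y -> ldisjoint y x.
Proof. by rewrite /ldisjoint bl_meetC. Qed.

Lemma ldisjoint0 x : ldisjoint x 0.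
Proof.
rewrite /ldisjoint labs0; apply: bl_le_anti; first exact: bl_meet_lbr.
by apply: bl_meet_glb; [apply: labs_ge0 | apply: bl_lexx].
Qed.

Lemma ldisjointD x y z : ldisjoint x y -> ldisjoint x z -> ldisjoint x (y + z).
Proof.
rewrite /ldisjoint => h1 h2; apply: bl_le_anti; last by apply: bl_meet_glb; apply: labs_ge0.
apply: bl_le_trans (bl_meet_ler _ (labs_triangle y z)) _.
by have := bl_meet_subadd (labs_ge0 x) (labs_ge0 y) (labs_ge0 z); rewrite h1 h2 addr0.
Qed.

Lemma ldisjoint_sum (I : Type) (r : seq I) (P : pred I) (f : I -> X) x :
  (forall i, P i -> ldisjoint x (f i)) -> ldisjoint x (\sum_(i <- r | P i) f i).
Proof. by move=> h; apply: big_ind; [exact: ldisjoint0 | exact: ldisjointD | exact: h]. Qed.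

Lemma ldisjointZl (t : R) x y : ldisjoint x y -> ldisjoint (t *: x) y.
Proof.
rewrite /ldisjoint labsZ => h; apply: bl_le_anti; last by apply: bl_meet_glb;
  rewrite -?labsZ; apply: labs_ge0.
have k0 : 0 <= `|t| + 1 by rewrite addr_ge0.
have le_k z : le 0 z -> le (`|t| *: z) ((`|t| + 1) *: z).
  by move=> z0; rewrite scalerDl scale1r -{1}[_ *: z]addr0; apply: bl_leDl.
have le_1k z : le 0 z -> le z ((`|t| + 1) *: z).
  by move=> z0; rewrite scalerDl scale1r -{1}[z]add0r; apply: bl_leDr;
    rewrite -(scaler0 _ `|t|); apply: bl_leZ.
apply: bl_le_trans (bl_meet_lel _ (le_k _ (labs_ge0 x))) _.
apply: bl_le_trans (bl_meet_ler _ (le_1k _ (labs_ge0 y))) _.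
by rewrite bl_meetZ // h scaler0; apply: bl_lexx.
Qed.

Lemma ldisjointZ (s t : R) x y : ldisjoint x y -> ldisjoint (s *: x) (t *: y).
Proof. by move=> h; apply/ldisjointZl/ldisjoint_sym/ldisjointZl/ldisjoint_sym. Qed.

Lemma ldisjoint_labs_leD x y : ldisjoint x y -> le (lab x) (lab (x + y)).
Proof.
rewrite /ldisjoint => h.
have h1 : le (lab x) (lab (x + y) + lab y).
  apply: bl_join_lub.
  - by have := bl_leD (bl_le_labs (x + y)) (bl_leN_labs y); rewrite addrK.
  - by have := bl_leD (bl_leN_labs (x + y)) (bl_le_labs y); rewrite opprD subrK.
rewrite -(bl_meet_idl h1).
apply: bl_le_trans (bl_meet_subadd (labs_ge0 x) (labs_ge0 _) (labs_ge0 y)) _.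
by rewrite h addr0; exact: bl_meet_lbr.
Qed.

Lemma ler_norm_sum_disjoint n (f : 'I_n -> X) (P : pred 'I_n) :
  pairwise_disjoint f -> `|\sum_(i < n | P i) f i| <= `|\sum_(i < n) f i|.
Proof.
move=> df; rewrite [X in _ <= `|X|](bigID P) /=; apply/bl_norm_le/ldisjoint_labs_leD.
apply: ldisjoint_sum => k nPk; apply: ldisjoint_sym; apply: ldisjoint_sum => j Pj.
by apply: df; apply: contraNneq nPk => ->.
Qed.

End BanachLatticeTheory.

Section LNorm.
Variable R : realType.
Implicit Types (q p s : \bar R) (a b : R).

Lemma ler_powR2r r a b : 0 <= r -> 0 <= a -> a <= b -> a `^ r <= b `^ r.
Proof. by move=> r0 a0 ab; apply: (ge0_ler_powR r0); rewrite ?nnegrE // (le_trans a0). Qed.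

Lemma powRrK r a : 0 <= a -> r != 0 -> (a `^ r) `^ r^-1 = a.
Proof. by move=> a0 r0; rewrite -powRrM mulfV // powRr1. Qed.

Lemma powRrVK r a : 0 <= a -> r != 0 -> (a `^ r^-1) `^ r = a.
Proof. by move=> a0 r0; rewrite -powRrM mulVf // powRr1. Qed.

Lemma sum_powR_ge0 r n (f : 'I_n -> R) : 0 <= \sum_(i < n) f i `^ r.
Proof. by apply: sumr_ge0 => i _; apply: powR_ge0. Qed.

Lemma ge1_erealP q : (1 <= q)%E -> (exists2 r : R, 1 <= r & q = r%:E) \/ q = +oo%E.
Proof. by case: q => [r r1|_|//]; [left; exists r | right]. Qed.

Lemma recip_ge0 s : (1 <= s)%E -> 0 <= recip s.
Proof. by case/ge1_erealP => [[r r1 ->]|->] //=; rewrite invr_ge0 (le_trans ler01). Qed.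

Lemma recip_le1 s : (1 <= s)%E -> recip s <= 1.
Proof. by case/ge1_erealP => [[r r1 ->]|->] //=; rewrite invf_le1 // (lt_le_trans ltr01). Qed.

Lemma lnorm_finE (r : R) n (a : 'I_n -> R) :
  lnorm r%:E a = (\sum_(i < n) `|a i| `^ r) `^ r^-1.
Proof. by []. Qed.

Lemma lnorm_pinftyE n (a : 'I_n -> R) : lnorm +oo%E a = \big[Num.max/0]_(i < n) `|a i|.
Proof. by []. Qed.

Lemma lnorm_ge0 q n (a : 'I_n -> R) : 0 <= lnorm q a.
Proof. by case: q => [r||]; rewrite ?lnorm_finE ?lnorm_pinftyE ?powR_ge0 ?bigmax_ge_id. Qed.

Lemma lnorm_le q n (a b : 'I_n -> R) : (1 <= q)%E ->
  (forall i, `|a i| <= `|b i|) -> lnorm q a <= lnorm q b.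
Proof.
case/ge1_erealP => [[r r1 ->]|->] ab; rewrite ?lnorm_finE ?lnorm_pinftyE.
  have r0 : 0 <= r by apply: le_trans r1.
  apply: ler_powR2r; rewrite ?invr_ge0 ?sum_powR_ge0 //.
  by apply: ler_sum => i _; apply: ler_powR2r.
apply: bigmax_le => [|i _]; first exact: bigmax_ge_id.
exact: le_trans (ab i) (le_bigmax _ _ i).
Qed.

Lemma lnormZ q n (a : 'I_n -> R) t : (1 <= q)%E -> 0 <= t ->
  lnorm q (fun i => t * a i) = t * lnorm q a.
Proof.
case/ge1_erealP => [[r r1 ->]|->] t0; rewrite ?lnorm_finE ?lnorm_pinftyE.
  have r0 : r != 0 by rewrite lt0r_neq0 // (lt_le_trans ltr01).
  under eq_bigr do rewrite normrM (ger0_norm t0) powRM //.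
  by rewrite -mulr_sumr powRM ?powR_ge0 ?sum_powR_ge0 ?powRrK.
elim/big_rec2: _ => [|i y1 y2 _ ->]; first by rewrite mulr0.
by rewrite normrM (ger0_norm t0) maxr_pMr.
Qed.

Lemma lnorm_delta q n (i : 'I_n) c : (1 <= q)%E ->
  lnorm q (fun j => if j == i then c else 0) = `|c|.
Proof.
case/ge1_erealP => [[r r1 ->]|->]; rewrite ?lnorm_finE ?lnorm_pinftyE.
  have r0 : r != 0 by rewrite lt0r_neq0 // (lt_le_trans ltr01).
  rewrite (bigD1 i) //= eqxx big1 ?addr0 ?powRrK //.
  by move=> j /negbTE ->; rewrite normr0 powR0.
apply: le_anti; apply/andP; split; last by apply: (bigmax_sup i) => //; rewrite eqxx.
by apply: bigmax_le => // j _; case: eqP; rewrite ?normr0.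
Qed.

Lemma lnorm_enum_val_le q n (A : {pred 'I_n}) (g : 'I_n -> R) : (1 <= q)%E ->
  lnorm q (fun j : 'I_#|A| => g (enum_val j)) <= lnorm q g.
Proof.
case/ge1_erealP => [[r r1 ->]|->]; rewrite ?lnorm_finE ?lnorm_pinftyE.
  have r0 : 0 <= r by apply: le_trans r1.
  apply: ler_powR2r; rewrite ?invr_ge0 ?sum_powR_ge0 //.
  rewrite -(big_enum_val (A:=A) (fun i => `|g i| `^ r)) /= [leRHS](bigID (mem A)) /= lerDl.
  by apply: sumr_ge0 => i _; apply: powR_ge0.
apply: bigmax_le => [|j _]; first exact: bigmax_ge_id.
exact: le_bigmax.
Qed.

Lemma lnorm_le_recip p q n (a : 'I_n -> R) : (1 <= p)%E -> (1 <= q)%E ->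
  recip q <= recip p -> lnorm q a <= lnorm p a.
Proof.
have le_sum_powR t i : 0 < t -> `|a i| <= (\sum_(j < n) `|a j| `^ t) `^ t^-1.
  move=> t0; rewrite -{1}(powRrK (normr_ge0 (a i)) (lt0r_neq0 t0)).
  apply: ler_powR2r; [by rewrite invr_ge0 ltW | exact: powR_ge0 |].
  by rewrite (bigD1 i) //= lerDl; apply: sumr_ge0 => j _; apply: powR_ge0.
case/ge1_erealP => [[t t1 ->]|->]; case/ge1_erealP => [[r r1 ->]|->];
  rewrite ?lnorm_finE ?lnorm_pinftyE /recip.
- have [t0 r0] : 0 < t /\ 0 < r by split; apply: lt_le_trans ltr01 _.
  move=> rt; have tr : t <= r by move: rt; rewrite lef_pV2 // posrE.
  set A := (\sum_(j < n) `|a j| `^ t) `^ t^-1.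
  have expD x : x `^ r = x `^ t * x `^ (r - t).
    by rewrite -powRD; rewrite subrKC ?(gt_eqF r0).
  have key : \sum_(i < n) `|a i| `^ r <= A `^ r.
    rewrite expD powRrVK; [|exact: sum_powR_ge0 | exact: lt0r_neq0].
    rewrite mulr_suml; apply: ler_sum => i _; rewrite expD.
    apply: ler_wpM2l; first exact: powR_ge0.
    by apply: ler_powR2r; [rewrite subr_ge0 | exact: normr_ge0 | exact: le_sum_powR].
  rewrite -[leRHS](powRrK (powR_ge0 _ _ : 0 <= A) (lt0r_neq0 r0)).
  by apply: ler_powR2r key; [rewrite invr_ge0 ltW | exact: sum_powR_ge0].
- move=> _; apply: bigmax_le => [|i _]; first exact: powR_ge0.
  by apply: le_sum_powR; apply: lt_le_trans ltr01 _.
- by rewrite leNgt invr_gt0 (lt_le_trans ltr01 r1).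
- by move=> _.
Qed.

Lemma lnorm_le_powR s n (u m : 'I_n -> R) rho : (1 <= s)%E -> 0 < rho ->
  (forall i, 0 <= u i <= m i `^ (rho * recip s)) ->
  lnorm s u <= (\sum_(i < n) m i `^ rho) `^ recip s.
Proof.
case/ge1_erealP => [[t t1 ->]|->] rho0 hu; rewrite ?lnorm_finE ?lnorm_pinftyE /recip.
  have t0 : 0 < t by apply: lt_le_trans t1.
  apply: ler_powR2r; [by rewrite invr_ge0 ltW | exact: sum_powR_ge0 |].
  apply: ler_sum => i _; have /andP[u0 um] := hu i.
  rewrite ger0_norm //; apply: le_trans (ler_powR2r (ltW t0) u0 um) _.
  by rewrite -powRrM divfK ?(lt0r_neq0 t0).
rewrite powRr0; apply: bigmax_le => // i _.
by have /andP[u0] := hu i; rewrite mulr0 powRr0 ger0_norm.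
Qed.

Lemma le_lnorm_weighted s q p n (b : 'I_n -> R) (S D : R) :
  (1 <= s)%E -> (1 <= q)%E -> (1 <= p)%E -> recip q + recip s <= recip p ->
  0 <= D -> (forall i, 0 < b i) ->
  (forall c : 'I_n -> R, (forall i, 0 < c i) ->
     S <= D * lnorm s (fun i => b i / c i) * lnorm q c) ->
  S <= D * lnorm p b.
Proof.
move=> s1 q1 p1 hrec D0 b0 hS; have s0 := recip_ge0 s1.
have [[r r1 eqq]|eqq] := ge1_erealP q1; rewrite {}eqq in hrec hS.
- have r0 : 0 < r by apply: lt_le_trans r1.
  rewrite [recip _]/= in hrec.
  have rs0 : 0 < r^-1 + recip s by rewrite ltr_wpDr // invr_gt0.
  set rho := (r^-1 + recip s)^-1.
  have rho0 : 0 < rho by rewrite invr_gt0.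
  have rho1 : 1 <= rho by rewrite invf_ge1 // (le_trans hrec) // recip_le1.
  set T := \sum_(i < n) b i `^ rho.
  (* the weights c_i = b_i^(rho/r) make both factors powers of T *)
  pose c i := b i `^ (rho / r).
  have c0 i : 0 < c i by apply: powR_gt0.
  have bc i : b i / c i = b i `^ (rho * recip s).
    have -> : rho * recip s = 1 - rho / r.
      by rewrite -(mulVf (lt0r_neq0 rs0)) -/rho mulrDr addrAC subrr add0r.
    by rewrite powRB ?powRr1 ?ltW ?(lt0r_neq0 (b0 i)) ?implybT.
  have hs : lnorm s (fun i => b i / c i) <= T `^ recip s.
    by apply: lnorm_le_powR => // i; rewrite bc powR_ge0 lexx.
  have hq : lnorm r%:E c = T `^ r^-1.
    rewrite lnorm_finE; congr (_ `^ _); apply: eq_bigr => i _.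
    by rewrite ger0_norm ?powR_ge0 // -powRrM divfK ?(lt0r_neq0 r0).
  apply: le_trans (hS c c0) _; rewrite hq -mulrA; apply: (ler_wpM2l D0).
  apply: le_trans (ler_wpM2r (powR_ge0 _ _) hs) _.
  rewrite -powRD; last by rewrite addrC (gt_eqF rs0).
  have -> : recip s + r^-1 = rho^-1 by rewrite invrK addrC.
  have hrho : recip rho%:E <= recip p by rewrite /= invrK.
  apply: le_trans _ (lnorm_le_recip b p1 _ hrho); last by rewrite lee_fin.
  rewrite lnorm_finE /T [X in _ <= X `^ _](eq_bigr (fun i => b i `^ rho)); first exact: lexx.
  by move=> i _; rewrite gtr0_norm.
- have s_le_p : recip s <= recip p by rewrite [recip _]/= add0r in hrec.
  apply: le_trans (hS (fun=> 1) (fun=> ltr01)) _; rewrite -mulrA; apply: (ler_wpM2l D0).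
  have lnorm1 : lnorm +oo%E (fun _ : 'I_n => 1 : R) <= 1.
    by apply: bigmax_le => // i _; rewrite normr1.
  apply: le_trans (ler_wpM2l (lnorm_ge0 _ _) lnorm1) _; rewrite mulr1.
  apply: le_trans (lnorm_le_recip _ p1 s1 s_le_p).
  by apply: lnorm_le => // i; rewrite divr1.
Qed.

End LNorm.

Lemma sum_enum_val_support (V : nmodType) n (A : {pred 'I_n}) (f : 'I_n -> V) :
  (forall i, i \notin A -> f i = 0) -> \sum_(i < n) f i = \sum_(j < #|A|) f (enum_val j).
Proof.
move=> f0; rewrite -(big_enum_val (A:=A) f) [LHS](bigID (mem A)) /=.
by rewrite [X in _ + X]big1 ?addr0.
Qed.

Lemma pairwise_disjoint_enum_val (R : realType) (X : banachLattice R) n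
    (A : {pred 'I_n}) (x : 'I_n -> X) :
  pairwise_disjoint x -> pairwise_disjoint (fun j : 'I_#|A| => x (enum_val j)).
Proof. by move=> dx j k jk; apply: dx; rewrite (inj_eq enum_val_inj). Qed.

Section RelativeDecomposition.
Variables (R : realType) (X Y : banachLattice R) (s : \bar R) (D : R).
Hypotheses (s1 : (1 <= s)%E) (D0 : 0 <= D) (XYdecomp : rel_decomp_const X Y s D).

Lemma rel_decomp_constW n (x : 'I_n -> X) (y : 'I_n -> Y) :
  pairwise_disjoint x -> pairwise_disjoint y -> (forall i, x i = 0 -> y i = 0) ->
  `|\sum_(i < n) y i| <= D * lnorm s (fun i => `|y i| / `|x i|) * `|\sum_(i < n) x i|.
Proof.
move=> dx dy xy0; pose A := [pred i | y i != 0].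
rewrite (@sum_enum_val_support _ _ A) => [|i]; last by rewrite inE negbK => /eqP.
have yA (j : 'I_#|A|) : y (enum_val j) != 0 by have := enum_valP j; rewrite inE.
have xA (j : 'I_#|A|) : x (enum_val j) != 0 by apply: contra (yA j) => /eqP/xy0 ->.
have := XYdecomp xA yA (pairwise_disjoint_enum_val (A:=A) dx)
  (pairwise_disjoint_enum_val (A:=A) dy).
move/le_trans; apply.
rewrite -(big_enum_val (A:=A) x); apply: ler_pM.
- by rewrite mulr_ge0 // lnorm_ge0.
- exact: normr_ge0.
- by apply: ler_wpM2l => //; apply: (lnorm_enum_val_le A (fun i => `|y i| / `|x i|)).
- exact: ler_norm_sum_disjoint.
Qed.

(* Write y_i as the convex combination of the theta b i *: y_i, with theta b i proportional
   to |xs b i|, and decompose each piece relative to the family xs b. *)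
Lemma rel_decomp_split (T : Type) (F : seq T) n (xs : T -> 'I_n -> X)
    (y : 'I_n -> Y) (m : 'I_n -> R) :
  (forall b, pairwise_disjoint (xs b)) -> pairwise_disjoint y ->
  (forall i, 0 < m i) -> (forall i, m i <= \sum_(b <- F) `|xs b i|) ->
  `|\sum_(i < n) y i| <=
    D * lnorm s (fun i => `|y i| / m i) * \sum_(b <- F) `|\sum_(i < n) xs b i|.
Proof.
move=> dxs dy m0 mM; pose M i := \sum_(b <- F) `|xs b i|.
have M0 i : 0 < M i by apply: lt_le_trans (mM i).
pose theta b i := `|xs b i| / M i.
have -> : \sum_(i < n) y i = \sum_(b <- F) \sum_(i < n) theta b i *: y i.
  rewrite exchange_big /=; apply: eq_bigr => i _.
  by rewrite -scaler_suml -mulr_suml -/(M i) mulfV ?scale1r // lt0r_neq0.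
rewrite mulr_sumr; apply: le_trans (ler_norm_sum _ _ _) _; apply: ler_sum => b _.
apply: le_trans (rel_decomp_constW (dxs b) _ _) _.
- by move=> i j ij; apply/ldisjointZ/dy.
- by move=> i xi0; rewrite /theta xi0 normr0 mul0r scale0r.
apply: ler_wpM2r; first exact: normr_ge0.
apply: (ler_wpM2l D0); apply: lnorm_le => // i.
have th0 : 0 <= theta b i by rewrite divr_ge0 // ltW.
rewrite !ger0_norm ?divr_ge0 ?(ltW (m0 i)) // normrZ ger0_norm //.
have [->|xb0] := eqVneq `|xs b i| 0; first by rewrite invr0 mulr0 divr_ge0 // ltW.
have -> : theta b i * `|y i| / `|xs b i| = `|y i| / M i.
  by rewrite /theta; field; rewrite xb0 lt0r_neq0.
by rewrite ler_wpM2l // lef_pV2 ?posrE ?(M0 i) ?(m0 i) ?(mM i).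
Qed.

End RelativeDecomposition.

Section SequenceLattice.
Variables (R : realType) (X : banachLattice R).
Implicit Types (N : nat).

Lemma Phi_empty N (b : 'I_N -> R) : ~ (exists x, @Bn R X N x) -> Phi X b = 0.
Proof.
move=> noB; rewrite /Phi.
suff -> : [set `|\sum_(i < N) b i *: x i| | x in @Bn R X N] = set0 by rewrite inf0.
by apply/seteqP; split => // r [x xB _]; apply: noB; exists x.
Qed.

Lemma Phi_ge0 N (b : 'I_N -> R) : 0 <= Phi X b.
Proof.
case: (pselect (exists x, @Bn R X N x)) => [[x xB]|noB]; last by rewrite Phi_empty.
by apply: lb_le_inf => [|_ [y _ <-]]; [exists `|\sum_(i < N) b i *: x i|; exists x|].
Qed.

Lemma Phi_le N (b : 'I_N -> R) x : @Bn R X N x -> Phi X b <= `|\sum_(i < N) b i *: x i|.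
Proof. by move=> xB; apply: ge_inf; [exists 0 => _ [y _ <-] | exists x]. Qed.

Lemma Phi_approx N (b : 'I_N -> R) d : (exists x, @Bn R X N x) -> 0 < d ->
  exists2 x, @Bn R X N x & `|\sum_(i < N) b i *: x i| < Phi X b + d.
Proof.
move=> [x0 x0B] d0.
have [||_ [x xB <-] lt_xd] :=
  @inf_lt _ [set `|\sum_(i < N) b i *: x i| | x in @Bn R X N] (Phi X b + d).
- by exists `|\sum_(i < N) b i *: x0 i|; exists x0.
- by rewrite /Phi ltrDl.
by exists x.
Qed.

Lemma Phi_widen N N' (le_N'N : (N' <= N)%N) (b : 'I_N -> R) :
  (exists x, @Bn R X N x) -> Phi X (fun k => b (widen_ord le_N'N k)) <= Phi X b.
Proof.
move=> [x0 x0B]; apply: lb_le_inf => [|_ [x [x1 dx] <-]].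
  by exists `|\sum_(i < N) b i *: x0 i|; exists x0.
have xB : @Bn R X N' (fun k => x (widen_ord le_N'N k)).
  by split=> // i j ij; apply: dx; apply: contra ij => /eqP [] /val_inj ->.
apply: le_trans (Phi_le _ xB) _.
rewrite -(big_ord_narrow (F := fun i => b i *: x i)).
by apply: ler_norm_sum_disjoint => i j ij; apply/ldisjointZ/dx.
Qed.

Lemma XLn_ne N (v : 'I_N -> R) :
  [set \sum_(b <- F) Phi X b |
    F in [set F : seq ('I_N -> R) | forall i, \sum_(b <- F) b i = v i]] !=set0.
Proof. by exists (\sum_(b <- [:: v]) Phi X b); exists [:: v] => // i; rewrite big_seq1. Qed.

Lemma XLn_le N (v : 'I_N -> R) (F : seq ('I_N -> R)) :
  (forall i, \sum_(b <- F) b i = v i) -> XLn X v <= \sum_(b <- F) Phi X b.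
Proof.
move=> Fv; apply: ge_inf; last by exists F.
by exists 0 => _ [G _ <-]; apply: sumr_ge0 => b _; apply: Phi_ge0.
Qed.

Lemma XLn_ge0 N (v : 'I_N -> R) : 0 <= XLn X v.
Proof.
apply: lb_le_inf; first exact: XLn_ne.
by move=> _ [G _ <-]; apply: sumr_ge0 => b _; apply: Phi_ge0.
Qed.

Lemma XLn_approx N (v : 'I_N -> R) d : 0 < d ->
  exists2 F : seq ('I_N -> R), (forall i, \sum_(b <- F) b i = v i) &
    \sum_(b <- F) Phi X b < XLn X v + d.
Proof.
move=> d0; have [|_ [F Fv <-] lt_Fd] := @inf_lt _ _ (XLn X v + d) (XLn_ne v).
  by rewrite /XLn ltrDl.
by exists F.
Qed.

Lemma XLn_empty N (v : 'I_N -> R) : ~ (exists x, @Bn R X N x) -> XLn X v = 0.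
Proof.
move=> noB; apply: le_anti; rewrite XLn_ge0 andbT.
by have := @XLn_le N v [:: v]; rewrite big_seq1 Phi_empty //; apply => i; rewrite big_seq1.
Qed.

End SequenceLattice.

Definition disjoint_support (R : realType) (T : Type) n (z : 'I_n -> T -> R) : Prop :=
  forall i j k, i != j -> z i k != 0 -> z j k = 0.

Lemma sum_disjoint_support (R : realType) (T : Type) n (z : 'I_n -> T -> R) k (c : R) :
  disjoint_support z ->
  \sum_(i < n) (if z i k != 0 then c else 0) = if [exists i, z i k != 0] then c else 0.
Proof.
move=> zd; case: existsP => [[i zik]|none]; last first.
  by apply: big1 => i _; case: ifP => // zik; case: none; exists i.
rewrite (bigD1 i) //= zik big1 ?addr0 // => j ji.
by rewrite (zd i j k) ?eqxx // eq_sym.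
Qed.

Section BlockRealization.
Variables (R : realType) (X : banachLattice R).
Implicit Types (N : nat).

Lemma XLn_widen N N' (le_N'N : (N' <= N)%N) (v : nat -> R) : (exists x, @Bn R X N x) ->
  XLn X (fun k : 'I_N' => v k) <= XLn X (fun k : 'I_N => v k).
Proof.
move=> NB; apply: lb_le_inf => [|_ [F Fv <-]]; first exact: XLn_ne.
pose G := map (fun b (k : 'I_N') => b (widen_ord le_N'N k)) F.
apply: le_trans (@XLn_le _ X _ _ G _) _.
  by move=> k; rewrite big_map; apply: (Fv (widen_ord le_N'N k)).
by rewrite big_map; apply: ler_sum => b _; apply: Phi_widen.
Qed.

Lemma XLnorm_ge (a : nat -> R) N : ((XLn X (fun k : 'I_N => a k))%:E <= XLnorm X a)%E.
Proof. by apply: ereal_sup_ubound; exists N. Qed.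

(* [0 <= l i] forces B_N(X) to be nonempty at the common length N, where XLn is monotone in N. *)
Lemma XLnorm_truncate n (w : 'I_n -> nat -> R) (l : 'I_n -> R) :
  (forall i, 0 <= l i) -> (forall i, ((l i)%:E < XLnorm X (w i))%E) ->
  exists N, forall i, l i < XLn X (fun k : 'I_N => w i k).
Proof.
move=> l0 lw.
have /choice [Nf Nf_gt] : forall i, exists N, l i < XLn X (fun k : 'I_N => w i k).
  by move=> i; have /ereal_sup_gt[_ [N _ <-]] := lw i; rewrite lte_fin; exists N.
exists (\max_(j < n) Nf j) => i.
have [|j eqN] := @bigop.eq_bigmax _ Nf.
  by rewrite card_ord (leq_ltn_trans _ (ltn_ord i)).
have NB : exists x, @Bn R X (\max_(j < n) Nf j) x.
  by apply: contrapT => noB; have := Nf_gt j; rewrite -eqN XLn_empty // ltNge l0.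
exact: lt_le_trans (Nf_gt i) (XLn_widen (@leq_bigmax _ Nf i) (w i) NB).
Qed.

Definition block_sum N n (z : 'I_n -> 'I_N -> R) (b : 'I_N -> R) (x : 'I_N -> X)
    (i : 'I_n) : X :=
  \sum_(k < N) (if z i k != 0 then b k else 0) *: x k.

Lemma block_sum_disjoint N n (z : 'I_n -> 'I_N -> R) b x :
  disjoint_support z -> pairwise_disjoint x -> pairwise_disjoint (block_sum z b x).
Proof.
move=> zd dx i j ij; apply: ldisjoint_sum => k _; apply: ldisjoint_sym.
apply: ldisjoint_sum => k' _; have [eqk | kk'] := eqVneq k k'; last by apply/ldisjointZ/dx.
rewrite -{k'}eqk.
have [_ | zik] := eqVneq (z i k) 0; first by rewrite /= scale0r; apply: ldisjoint0.
by rewrite (zd i j k ij zik) eqxx scale0r; apply/ldisjoint_sym/ldisjoint0.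
Qed.

Lemma norm_sum_block_sum_le N n (z : 'I_n -> 'I_N -> R) b x :
  disjoint_support z -> pairwise_disjoint x ->
  `|\sum_(i < n) block_sum z b x i| <= `|\sum_(k < N) b k *: x k|.
Proof.
move=> zd dx; rewrite /block_sum exchange_big /=.
under eq_bigr do
  rewrite -scaler_suml sum_disjoint_support // (fun_if (fun c => c *: _)) scale0r.
by rewrite -big_mkcond; apply: ler_norm_sum_disjoint => i j ij; apply/ldisjointZ/dx.
Qed.

Lemma XLn_block_realization N n (z : 'I_n -> 'I_N -> R) d :
  disjoint_support z -> 0 < d ->
  exists (F : seq ('I_N -> R)) (xs : ('I_N -> R) -> 'I_n -> X),
    [/\ forall b, pairwise_disjoint (xs b),
        \sum_(b <- F) `|\sum_(i < n) xs b i| <= XLn X (fun k => \sum_(i < n) z i k) + d &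
        forall i, XLn X (z i) <= \sum_(b <- F) `|xs b i|].
Proof.
move=> zd d0; case: (pselect (exists x, @Bn R X N x)) => [NB|noB]; last first.
  exists [::], (fun _ _ => 0); split => [b i j _|//|i].
  - exact: ldisjoint0.
  - by rewrite big_nil addr_ge0 ?XLn_ge0 // ltW.
  - by rewrite XLn_empty // big_nil.
have d20 : 0 < d / 2 by rewrite divr_gt0.
have [F Fv FPhi] := XLn_approx X (fun k => \sum_(i < n) z i k) d20.
pose e := d / 2 / (size F).+1%:R.
have e0 : 0 < e by rewrite divr_gt0 // ltr0n.
have /choice [xf xfP] : forall b : 'I_N -> R,
    exists x, @Bn R X N x /\ `|\sum_(k < N) b k *: x k| < Phi X b + e.
  by move=> b; have [x xB xlt] := Phi_approx b NB e0; exists x.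
exists F, (fun b => block_sum z b (xf b)); split.
- by move=> b; apply: block_sum_disjoint => //; case: (xfP b) => -[].
- have eF : e *+ size F <= d / 2.
    by rewrite -mulr_natr /e -mulrA ger_pMr // mulrC ler_pdivrMr ?ltr0n // mul1r ler_nat.
  have le_Phi : \sum_(b <- F) `|\sum_(i < n) block_sum z b (xf b) i| <=
                \sum_(b <- F) (Phi X b + e).
    apply: ler_sum => b _; have [[_ dx] lt_e] := xfP b.
    exact: le_trans (norm_sum_block_sum_le _ zd dx) (ltW lt_e).
  apply: le_trans le_Phi _.
  rewrite big_split /= big_const_seq count_predT iter_addr_0 [d in _ <= _ + d]splitr addrA.
  exact: lerD (ltW FPhi) eF.
- move=> i; pose g (b : 'I_N -> R) k := if z i k != 0 then b k else 0.
  apply: le_trans (@XLn_le _ X _ _ (map g F) _) _.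
    move=> k; rewrite big_map /g -big_mkcond /=; case: eqVneq => [-> |zik] /=.
      by rewrite big_pred0.
    rewrite big_mkcond /= Fv (bigD1 i) //= big1 ?addr0 // => j ji.
    by rewrite (zd i j k) // eq_sym.
  rewrite big_map; apply: ler_sum => b _.
  by apply: Phi_le; case: (xfP b).
Qed.

End BlockRealization.

Lemma le_of_le_addr_small (R : realType) (a b K : R) : 0 <= K ->
  (forall e, 0 < e -> e <= 2^-1 -> a <= b + e * K) -> a <= b.
Proof.
move=> K0 h; apply/ler_addgt0Pr => d d0.
pose e := Num.min 2^-1 (d / (K + 1)).
have K1 : 0 < K + 1 by apply: ltr_wpDl.
have e0 : 0 < e by rewrite lt_min invr_gt0 ltr0n divr_gt0.
have e_half : e <= 2^-1 by rewrite ge_min lexx.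
have e_d : e <= d / (K + 1) by rewrite ge_min lexx orbT.
apply: le_trans (h e e0 e_half) _; rewrite lerD2l.
apply: le_trans (ler_wpM2r K0 e_d) _.
by rewrite mulrAC ler_pdivrMr // ler_pM2l //; lra.
Qed.

Lemma perturbation_bound (R : realType) (e L : R) : 0 < e -> e <= 2^-1 -> 0 <= L ->
  (1 - e)^-1 * ((1 + e) * L + e) <= L + e * (4 * L + 2).
Proof.
move=> e0 e2 L0; have e1 : 0 < 1 - e by lra.
have h : 0 <= e * (1 - 2 * e) * (2 * L + 1) by rewrite !mulr_ge0 //; lra.
rewrite mulrC ler_pdivrMr //; nra.
Qed.

Lemma min_normr_eq0 (R : realType) (a b : R) : Num.min `|a| `|b| = 0 -> a != 0 -> b = 0.
Proof.
move=> ab0 a0; have : (`|a| == 0) || (`|b| == 0).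
  by move: ab0; rewrite minEle; case: ifP => _ ->; rewrite eqxx ?orbT.
by rewrite !normr_eq0 (negbTE a0) => /eqP.
Qed.

Section FiniteRepresentability.
Variables (R : realType) (X : banachLattice R) (q : \bar R).
Hypotheses (q1 : (1 <= q)%E) (Xflr : flr_in_XL X q).

Lemma flr_in_XL_blocks n (c : 'I_n -> R) e :
  (forall i, 0 < c i) -> 0 < e -> e <= 1 ->
  exists N (z : 'I_n -> 'I_N -> R),
    [/\ disjoint_support z, forall i, (1 - e) * c i < XLn X (z i) &
        XLn X (fun k => \sum_(i < n) z i k) <= (1 + e) * lnorm q c].
Proof.
move=> c0 e0 e1; have [z [_ zd zq]] := Xflr n e0.
pose w i k := c i * z i k.
have w_gt i : (((1 - e) * c i)%:E < XLnorm X (w i))%E.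
  pose ci j := if j == i then c i else 0.
  have [+ _] := zq ci; rewrite lnorm_delta // gtr0_norm //.
  have -> : (fun k => \sum_(j < n) ci j * z j k) = w i.
    apply: funext => k; rewrite (bigD1 i) //= /ci eqxx big1 ?addr0 // => j /negbTE ->.
    by rewrite mul0r.
  by apply: lt_le_trans; rewrite lte_fin gtr_pMl // ltrBlDr ltrDl.
have [|N wN] := @XLnorm_truncate _ X n w (fun i => (1 - e) * c i) _ w_gt.
  by move=> i; rewrite mulr_ge0 ?subr_ge0 // ltW.
exists N, (fun i (k : 'I_N) => w i k); split => //.
- move=> i j k ij; rewrite /w mulf_eq0 negb_or => /andP[_ zik].
  by rewrite (min_normr_eq0 (zd i j ij k) zik) mulr0.
- apply: le_trans (_ : XLn X (fun k : 'I_N => \sum_(i < n) c i * z i k) <= _) => //.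
  by rewrite -lee_fin; apply: le_trans (XLnorm_ge _ _ N) (zq c).2.
Qed.

End FiniteRepresentability.

Section UpperEstimate.
Variables (R : realType) (X Y : banachLattice R) (s q : \bar R) (D : R).
Hypotheses (s1 : (1 <= s)%E) (q1 : (1 <= q)%E) (D0 : 0 <= D).
Hypotheses (XYdecomp : rel_decomp_const X Y s D) (Xflr : flr_in_XL X q).

Lemma rel_decomp_weighted_le n (y : 'I_n -> Y) (c : 'I_n -> R) :
  pairwise_disjoint y -> (forall i, 0 < c i) ->
  `|\sum_(i < n) y i| <= D * lnorm s (fun i => `|y i| / c i) * lnorm q c.
Proof.
move=> dy c0; set Ls := lnorm s _; set Lq := lnorm q c.
have [Ls0 Lq0] : 0 <= Ls /\ 0 <= Lq by split; apply: lnorm_ge0.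
(* For each e <= 1/2 the block realization yields D Ls (1 - e)^-1 ((1 + e) Lq + e). *)
rewrite -mulrA; apply: (le_of_le_addr_small (K := D * (Ls * (4 * Lq + 2)))).
  by rewrite !mulr_ge0 // addr_ge0 ?mulr_ge0.
move=> e e0 e_half; have e1 : e <= 1 by apply: le_trans e_half _; rewrite invf_le1 ?ler1n.
have [N [z [zd z_gt z_le]]] := flr_in_XL_blocks q1 Xflr c0 e0 e1.
have [F [xs [dxs xs_sum xs_gt]]] := XLn_block_realization X zd e0.
have m0 i : 0 < (1 - e) * c i.
  by rewrite mulr_gt0 // subr_gt0 (le_lt_trans e_half) // invf_lt1 ?ltr1n.
have m_le i := le_trans (ltW (z_gt i)) (xs_gt i).
apply: le_trans (rel_decomp_split s1 D0 XYdecomp dxs dy m0 m_le) _.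
have -> : lnorm s (fun i => `|y i| / ((1 - e) * c i)) = (1 - e)^-1 * Ls.
  rewrite -lnormZ ?invr_ge0 ?subr_ge0 //; congr lnorm; apply: funext => i.
  by rewrite invfM mulrCA.
rewrite (mulrCA e D) -mulrDr -mulrA; apply: (ler_wpM2l D0).
have sum_le : \sum_(b <- F) `|\sum_(i < n) xs b i| <= (1 + e) * Lq + e.
  by apply: le_trans xs_sum _; rewrite lerD2r.
apply: le_trans (ler_wpM2l _ sum_le) _; first by rewrite mulr_ge0 // invr_ge0 subr_ge0.
rewrite [_ * Ls]mulrC -mulrA (mulrCA e) -mulrDr; apply: (ler_wpM2l Ls0).
exact: perturbation_bound.
Qed.

Lemma upper_est_const_of_rel_decomp p : (1 <= p)%E -> recip q + recip s <= recip p ->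
  upper_est_const Y p D.
Proof.
move=> p1 hrec n y dy; pose A := [pred i | y i != 0].
rewrite (@sum_enum_val_support _ _ A) => [|i]; last by rewrite inE negbK => /eqP.
have yA (j : 'I_#|A|) : 0 < `|y (enum_val j)| by have := enum_valP j; rewrite inE normr_gt0.
apply: le_trans (_ : _ <= D * lnorm p (fun j => `|y (enum_val j)|)) _.
  apply: le_lnorm_weighted s1 q1 p1 hrec D0 yA _ => c c0.
  exact: rel_decomp_weighted_le (pairwise_disjoint_enum_val dy) c0.
by apply: (ler_wpM2l D0); apply: (lnorm_enum_val_le A (fun i => `|y i|)).
Qed.

End UpperEstimate.

Lemma infinite_dim_exists_neq0 (R : realType) (Z : banachLattice R) :
  infinite_dim Z -> exists w : Z, w != 0.
Proof.
move=> /(_ 1%N) [v v_indep]; exists (v ord0); apply/eqP => v0.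
have := v_indep (fun=> 1) _ ord0; rewrite big_ord1 v0 scaler0 => /(_ erefl) /eqP.
by rewrite oner_eq0.
Qed.

Lemma pairwise_disjoint1 (R : realType) (Z : banachLattice R) (f : 'I_1 -> Z) :
  pairwise_disjoint f.
Proof. by move=> i j; rewrite !ord1 eqxx. Qed.

Lemma rel_decomp_const_ge0 (R : realType) (X Y : banachLattice R) s D :
  infinite_dim X -> infinite_dim Y -> rel_decomp_const X Y s D -> 0 <= D.
Proof.
move=> /infinite_dim_exists_neq0 [v v0] /infinite_dim_exists_neq0 [w w0] XYdecomp.
have := XYdecomp 1%N (fun=> v) (fun=> w) (fun=> v0) (fun=> w0)
  (pairwise_disjoint1 _) (pairwise_disjoint1 _).
rewrite !big_ord1 => le_w; rewrite leNgt; apply/negP => D_lt0.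
have : D * lnorm s (fun _ : 'I_1 => `|w| / `|v|) * `|v| <= 0.
  by rewrite -mulrA nmulr_rle0 // mulr_ge0 // lnorm_ge0.
by move/(le_trans le_w); rewrite normr_le0 (negbTE w0).
Qed.

Lemma upper_est_const_ge0 (R : realType) (Y : banachLattice R) p M :
  infinite_dim Y -> upper_est_const Y p M -> 0 <= M.
Proof.
move=> /infinite_dim_exists_neq0 [w w0] YM.
have := YM 1%N (fun=> w) (pairwise_disjoint1 _); rewrite big_ord1 => le_w.
rewrite leNgt; apply/negP => M_lt0.
have : M * lnorm p (fun _ : 'I_1 => `|w|) <= 0 by rewrite nmulr_rle0 // lnorm_ge0.
by move/(le_trans le_w); rewrite normr_le0 (negbTE w0).
Qed.

Unset Implicit Arguments.
Unset Strict Implicit.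

Theorem mainTheorem12 (R : realType) (X Y : banachLattice R) (s q : \bar R) :
  infinite_dim X -> infinite_dim Y ->
  (1 <= s)%E -> rel_decomposable X Y s ->
  (1 <= q)%E -> flr_in_XL X q -> recip q + recip s <= 1 ->
  forall p : \bar R, (1 <= p)%E -> recip q + recip s <= recip p ->
    upper_estimate Y p /\ Mp Y p <= Ds X Y s.
Proof.
(* The hypothesis 1/q + 1/s <= 1 is implied by 1/q + 1/s <= 1/p <= 1. *)
move=> iX iY s1 [D0 XYdecomp0] q1 Xflr _ p p1 hrec.
have upper D : rel_decomp_const X Y s D -> upper_est_const Y p D.
  move=> XYdecomp; have D_ge0 := rel_decomp_const_ge0 iX iY XYdecomp.
  exact: (upper_est_const_of_rel_decomp s1 q1 D_ge0 XYdecomp Xflr p1 hrec).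
split; first by exists D0; apply: upper.
apply: lb_le_inf => [|D XYdecomp]; first by exists D0.
apply: ge_inf; last exact: upper.
by exists 0 => M; apply: upper_est_const_ge0 iY.
Qed.
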